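(* Let $q$ be a power of $2$, $k\ge1$, and let $T=\{x\in\mathbb{F}_{q^{3k}}:\mathrm{Tr}_{q^{3k}/q^k}(x)=0\}$. Then for every $c\in\mathbb{F}_{q^{3k}}\setminus\mathbb{F}_{q^k}$, \[ \sum_{x\in T}(-1)^{\mathrm{Tr}_{q^{3k}/2}\left(c\,x^{1+2q^k+q^{2k}}\right)}=0. \]
   Context: $\mathbb{F}_m$ denotes the finite field with $m$ elements. $\mathrm{Tr}_{q^{3k}/q^k}(x)=x+x^{q^k}+x^{q^{2k}}$ is the relative trace to the subfield $\mathbb{F}_{q^k}$, and $\mathrm{Tr}_{q^{3k}/2}$ is the absolute trace from $\mathbb{F}_{q^{3k}}$ to $\mathbb{F}_2$. *)

From HB Require Import structures.
From mathcomp Require Import all_boot all_order all_algebra all_field.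
Set Implicit Arguments. Unset Strict Implicit. Unset Printing Implicit Defensive.
Import GRing.Theory.
Local Open Scope ring_scope.

Definition relTr (F : finFieldType) (Q : nat) (x : F) : F :=
  x + x ^+ Q + x ^+ (Q ^ 2)%N.

(* Absolute trace to F_2 of a field of order 2^n: sum_{i<n} x^(2^i). *)
Definition absTr (F : finFieldType) (n : nat) (x : F) : F :=
  \sum_(i < n) x ^+ (2 ^ i)%N.

(* (-1)^{t} for t in the prime field F_2 ⊆ F, as an integer. *)
Definition sgnF2 (F : finFieldType) (t : F) : int :=
  if t == 0 then 1 else -1.

Definition inT (F : finFieldType) (Q : nat) (x : F) : bool := relTr Q x == 0.

From HB Require Import structures.
From mathcomp Require Import all_boot all_order all_algebra all_field.
From mathcomp Require Import ring zify.
Set Implicit Arguments. Unset Strict Implicit. Unset Printing Implicit Defensive.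
Import GRing.Theory Num.Theory.
Local Open Scope ring_scope.

(* Let F be the field with Q^3 elements, Q = 2^e, let sigma x = x^Q be its
   Frobenius over the subfield K = F_Q, T = ker Tr_{F/K}, d = 1 + 2Q + Q^2 and
   s(x) = (-1)^{Tr_{F/F_2}(c x^d)}; we show S = sum_{x in T} s(x) = 0.
   The exponent d is chosen so that (l x)^d = l^4 x^d for l in K, so the
   transitivity Tr_{F/F_2} = Tr_{K/F_2} o Tr_{F/K} turns the sum of s(l x)
   over l in K into a complete character sum over K: it equals Q when
   Tr_{F/K}(c x^d) = 0 and 0 otherwise.  On T this trace factors as
   x sigma(x) sigma^2(x) (sigma(w) x + w sigma(x)) with w = c + sigma(c) != 0,
   so it vanishes exactly on the line w K, which has Q points.  Summing s(l x)
   over l in K and x in T therefore gives Q * Q; summing in the other order,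
   the multiplications by l in K^* permute T, so the same double sum is
   |T| + (Q - 1) S = Q^2 + (Q - 1) S. *)

Section Char2Frobenius.
Variables (R : comNzRingType) (pchar2 : (2 \in [pchar R])%N).

Lemma frob2D (x y : R) i : (x + y) ^+ (2 ^ i) = x ^+ (2 ^ i) + y ^+ (2 ^ i).
Proof. by apply: exprDn_pchar; rewrite pnatX (pnatE _ (pcharf_prime pchar2)) pchar2. Qed.

Lemma frob2_sum I (r : seq I) (P : pred I) (f : I -> R) i :
  (\sum_(j <- r | P j) f j) ^+ (2 ^ i) = \sum_(j <- r | P j) f j ^+ (2 ^ i).
Proof.
apply: (big_morph (fun x : R => x ^+ (2 ^ i))); first by move=> x y; rewrite frob2D.
by rewrite expr0n expn_eq0.
Qed.

End Char2Frobenius.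

(* Over a domain of characteristic 2 these powers are also injective, since
   x^(2^i) - y^(2^i) = (x - y)^(2^i). *)
Lemma frob2_inj (R : idomainType) (pchar2 : (2 \in [pchar R])%N) i :
  injective (fun x : R => x ^+ (2 ^ i)).
Proof.
move=> x y /= xy; apply/eqP; rewrite -subr_eq0.
have : (x - y) ^+ (2 ^ i) == 0.
  by rewrite (oppr_pchar2 pchar2) frob2D // xy (addrr_pchar2 pchar2).
by rewrite expf_eq0 => /andP[].
Qed.

Lemma card_roots_lt (R : finIdomainType) (p : {poly R}) :
  p != 0 -> (#|[pred x | root p x]| < size p)%N.
Proof.
move=> p_neq0; rewrite cardE; apply: max_poly_roots => //; last exact: enum_uniq.
by apply/allP => x; rewrite mem_enum.
Qed.

(* Rank-nullity as an inequality: if an additive map f sends V into A, then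
   |V| <= |A| |ker f|, since each fiber of f is a translate of the kernel. *)
Lemma card_le_image_ker (V W : finZmodType) (f : V -> W) (A : {pred W}) :
  {morph f : x y / x - y} -> (forall x, f x \in A) ->
  (#|V| <= #|A| * #|[pred x | f x == 0%R]|)%N.
Proof.
move=> fB fA; rewrite -sum1_card (partition_big f (mem A)) //=.
rewrite -sum_nat_const; apply: leq_sum => a _; rewrite sum1_card.
case: (pickP [pred x | f x == a]) => [x0 /eqP fx0 | no_x]; last first.
  by rewrite (eq_card0 (fun x => no_x x)).
rewrite -(card_imset [pred x | f x == a] (subIr x0)).
apply: subset_leq_card; apply/subsetP => _ /imsetP[x /eqP fx ->].
by rewrite inE fB fx fx0 subrr.
Qed.

Section CubicExtension.
Variables (F : finFieldType) (e : nat).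
Hypotheses (e_gt0 : (0 < e)%N) (cardF : #|F| = ((2 ^ e) ^ 3)%N).
Local Notation Q := (2 ^ e)%N.
Implicit Types x y l : F.

Lemma pcharF2 : (2 \in [pchar F])%N.
Proof. by apply: (@card_finPcharP _ _ (e * 3)); rewrite // cardF expnM. Qed.

Lemma Q_gt1 : (1 < Q)%N.
Proof. by rewrite -{1}(expn0 2) ltn_exp2l. Qed.

Definition sigma x := x ^+ Q.

Lemma sigmaD x y : sigma (x + y) = sigma x + sigma y.
Proof. exact: frob2D pcharF2 _ _ _. Qed.

Lemma sigmaM x y : sigma (x * y) = sigma x * sigma y.
Proof. exact: exprMn. Qed.

Lemma sigmaX x n : sigma (x ^+ n) = sigma x ^+ n.
Proof. exact: exprAC. Qed.

Lemma sigma3 x : sigma (sigma (sigma x)) = x.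
Proof. by rewrite /sigma -!exprM -[RHS](expf_card x) cardF !expnS expn0 muln1 mulnA. Qed.

Lemma sigmaV x : sigma x^-1 = (sigma x)^-1.
Proof. exact: exprVn. Qed.

Lemma sigma0 : sigma 0 = 0.
Proof. by rewrite /sigma expr0n expn_eq0. Qed.

Lemma sigma_eq0 x : (sigma x == 0) = (x == 0).
Proof. by rewrite /sigma expf_eq0 expn_gt0. Qed.

Definition FQ := [pred l : F | sigma l == l].

Lemma FQP l : reflect (sigma l = l) (l \in FQ).
Proof. exact: eqP. Qed.

Definition Tker := [pred x : F | inT Q x].

Lemma relTrE x : relTr Q x = x + sigma x + sigma (sigma x).
Proof. by rewrite /relTr /sigma -exprM expnS expn1. Qed.

Lemma relTrD x y : relTr Q (x + y) = relTr Q x + relTr Q y.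
Proof. rewrite !relTrE !sigmaD; ring. Qed.

Lemma relTrB x y : relTr Q (x - y) = relTr Q x - relTr Q y.
Proof. by rewrite !(oppr_pchar2 pcharF2) relTrD. Qed.

Lemma relTr_sigma x : relTr Q (sigma x) = relTr Q x.
Proof. by rewrite !relTrE sigma3 addrC addrA. Qed.

Lemma relTr_FQ x : relTr Q x \in FQ.
Proof. by apply/FQP; rewrite -[RHS]relTr_sigma !relTrE !sigmaD. Qed.

Lemma relTrZ l x : l \in FQ -> relTr Q (l * x) = l * relTr Q x.
Proof. by move/FQP => sl; rewrite !relTrE !sigmaM !sl; ring. Qed.

(* |K| <= Q, since K consists of roots of X^Q - X. *)
Lemma card_FQ_le : (#|FQ| <= Q)%N.
Proof.
have sizeP : size ('X^Q - 'X : {poly F}) = Q.+1.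
  by rewrite size_polyDl ?size_polyXn // size_polyN size_polyX ltnS Q_gt1.
have := @card_roots_lt F ('X^Q - 'X); rewrite sizeP -size_poly_eq0 sizeP ltnS.
move=> /(_ isT); apply: leq_trans; apply: subset_leq_card; apply/subsetP => x.
by rewrite !inE /root !hornerE subr_eq0.
Qed.

(* |T| <= Q^2, since T consists of roots of X^(Q^2) + X^Q + X. *)
Lemma card_Tker_le : (#|Tker| <= Q ^ 2)%N.
Proof.
have size1 : size ('X + 'X^Q : {poly F}) = Q.+1.
  by rewrite addrC size_polyDl size_polyXn // size_polyX ltnS Q_gt1.
have sizeP : size ('X^(Q ^ 2) + ('X + 'X^Q) : {poly F}) = (Q ^ 2).+1.
  rewrite size_polyDl size_polyXn // size1 ltnS expnS expn1.
  by rewrite -{1}(mul1n Q) ltn_mul2r Q_gt1 (ltnW Q_gt1).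
have := @card_roots_lt F ('X^(Q ^ 2) + ('X + 'X^Q)).
rewrite sizeP -size_poly_eq0 sizeP ltnS => /(_ isT); apply: leq_trans.
apply: subset_leq_card; apply/subsetP => x.
rewrite !inE /inT /root /relTr !hornerE => /eqP Tx.
by apply/eqP; rewrite /= -Tx; ring.
Qed.

(* Both bounds are sharp, because |F| = Q^3 <= |K| |T|. *)
Lemma card_FQ_Tker : #|FQ| = Q /\ #|Tker| = (Q ^ 2)%N.
Proof.
have leF : (Q * Q ^ 2 <= #|FQ| * #|Tker|)%N.
  by rewrite -expnS -cardF; exact: card_le_image_ker relTrB relTr_FQ.
have leK := card_FQ_le; have leT := card_Tker_le.
have Q_gt0 : (0 < Q)%N by rewrite expn_gt0.
have Q2_gt0 : (0 < Q ^ 2)%N by rewrite !expn_gt0.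
have cardK : #|FQ| = Q.
  apply/eqP; rewrite eqn_leq leK -(leq_pmul2r Q2_gt0) (leq_trans leF) //.
  by rewrite leq_mul2l leT orbT.
split=> //; apply/eqP; rewrite eqn_leq leT -(leq_pmul2l Q_gt0).
by rewrite cardK in leF.
Qed.

Lemma card_FQ : #|FQ| = Q. Proof. by case: card_FQ_Tker. Qed.
Lemma card_Tker : #|Tker| = (Q ^ 2)%N. Proof. by case: card_FQ_Tker. Qed.

Definition trQ y := \sum_(j < e) y ^+ (2 ^ j).

Lemma trQD x y : trQ (x + y) = trQ x + trQ y.
Proof. by rewrite /trQ -big_split; apply: eq_bigr => j _; rewrite (frob2D pcharF2). Qed.

Lemma trQ0 : trQ 0 = 0.
Proof. by rewrite /trQ big1 // => j _; rewrite expr0n expn_eq0. Qed.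

Lemma absTr_relTr x : absTr (e * 3) x = trQ (relTr Q x).
Proof.
rewrite /absTr /trQ relTrE (_ : (e * 3 = e + (e + e))%N); last by lia.
rewrite !big_split_ord [RHS](eq_bigr (fun j : 'I_e =>
  x ^+ (2 ^ j) + x ^+ (2 ^ (e + j)) + x ^+ (2 ^ (e + (e + j))))); last first.
  by move=> j _; rewrite !(frob2D pcharF2) /sigma -!exprM -!expnD addnA.
by rewrite !big_split /= addrA.
Qed.

(* On K the trace is F_2-valued: it is a fixed point of squaring. *)
Lemma trQ_01 l : l \in FQ -> trQ l = 0 \/ trQ l = 1.
Proof.
move/FQP; rewrite /sigma => sl.
have sq : trQ l ^+ 2 = trQ l.
  have [e' def_e] : exists e', e = e'.+1 by exists e.-1; lia.
  move: sl; rewrite /trQ def_e => sl.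
  rewrite -[2%N]/(2 ^ 1)%N (frob2_sum pcharF2) big_ord_recr big_ord_recl /=.
  rewrite -exprM -expnSr sl expn0 expr1 addrC; congr (_ + _).
  by apply: eq_bigr => j _; rewrite -exprM -expnSr.
have : trQ l * (trQ l - 1) == 0 by rewrite mulrBr mulr1 -expr2 sq subrr.
by rewrite mulf_eq0 subr_eq0 => /orP[] /eqP; [left | right].
Qed.

(* The trace of K is not identically zero: the roots of the nonzero
   polynomial sum_{j<e} X^(2^j) of degree 2^(e-1) cannot fill K. *)
Lemma trQ_neq0 : exists2 l, l \in FQ & trQ l = 1.
Proof.
suff [l Kl trl_neq0] : exists2 l, l \in FQ & trQ l != 0.
  by exists l => //; case: (trQ_01 Kl) trl_neq0 => ->; rewrite ?eqxx.
apply/exists_inP; apply: contraT; rewrite negb_exists_in => /forall_inP trK0.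
have [e' def_e] : exists e', e = e'.+1 by exists e.-1; lia.
pose P : {poly F} := \sum_(j < e) 'X^(2 ^ j).
have sizeP : size P = (2 ^ e').+1.
  rewrite /P def_e big_ord_recr /= addrC size_polyDl size_polyXn //.
  rewrite ltnS; apply: leq_trans (size_sum _ _ _) _; apply/bigmax_leqP => j _.
  by rewrite size_polyXn ltn_exp2l.
have := @card_roots_lt F P.
rewrite -size_poly_eq0 sizeP ltnS => /(_ isT) roots_le.
suff : (Q <= 2 ^ e')%N by rewrite def_e leq_exp2l // ltnn.
apply: leq_trans roots_le; rewrite -card_FQ; apply: subset_leq_card.
apply/subsetP => x Kx; rewrite inE /root /P horner_sum.
apply/eqP; rewrite -[RHS](eqP (negPn (trK0 x Kx))).
by apply: eq_bigr => j _; rewrite hornerXn.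
Qed.

(* The additive character (-1)^{Tr_{K/F_2}} of K sums to zero: translating
   by an element of trace 1 flips every sign. *)
Lemma sum_sgn_trQ : \sum_(l in FQ) sgnF2 (trQ l) = 0 :> int.
Proof.
have [l0 Kl0 trl0] := trQ_neq0; move/FQP: (Kl0) => sl0.
have flip : forall l, l \in FQ -> sgnF2 (trQ (l + l0)) = - sgnF2 (trQ l).
  move=> l Kl; rewrite trQD trl0 /sgnF2.
  case: (trQ_01 Kl) => ->; rewrite ?add0r ?(addrr_pchar2 pcharF2) eqxx.
    by rewrite oner_eq0.
  by rewrite oner_eq0 opprK.
set S := \sum_(l in FQ) _; suff : S = - S by lia.
rewrite {1}/S (reindex_inj (addIr l0)) /= -sumrN.
apply: eq_big => l; first by rewrite !inE sigmaD sl0 (inj_eq (addIr l0)).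
by rewrite inE sigmaD sl0 (inj_eq (addIr l0)) => /eqP sl; rewrite flip //; apply/FQP.
Qed.

Local Notation d := (1 + 2 * Q + Q ^ 2)%N.

(* x^d = x sigma(x)^2 sigma^2(x), whence (l x)^d = l^4 x^d for l in K. *)
Lemma expd x : x ^+ d = x * sigma x ^+ 2 * sigma (sigma x).
Proof. by rewrite !exprD expr1 expr0 mulr1 expnS expn1 exprM /sigma; ring. Qed.

Definition csign (c x : F) : int := sgnF2 (absTr (e * 3) (c * x ^+ d)).

(* Summing over the K-multiples of x: (l x)^d = l^4 x^d, and l |-> l^4 t
   permutes K when t != 0, so the sum is Q or 0 by sum_sgn_trQ. *)
Lemma sum_csign_FQ c x :
  \sum_(l in FQ) csign c (l * x) = if relTr Q (c * x ^+ d) == 0 then Q%:Z else 0.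
Proof.
set t := relTr Q (c * x ^+ d).
have -> : \sum_(l in FQ) csign c (l * x) =
          \sum_(l in FQ) sgnF2 (trQ (l ^+ (2 ^ 2) * t)).
  apply: eq_bigr => l /FQP sl; rewrite /csign absTr_relTr -relTrZ; last first.
    by apply/FQP; rewrite sigmaX sl.
  by rewrite exprMn (expd l) !sl; congr (sgnF2 (trQ (relTr Q _))); ring.
have [-> | t_neq0] := eqVneq t 0.
  rewrite (eq_bigr (fun _ => 1)); last by move=> l _; rewrite mulr0 trQ0 /sgnF2 eqxx.
  by rewrite sumr_const card_FQ natz.
have /FQP st := relTr_FQ (c * x ^+ d); rewrite -/t in st.
rewrite -[RHS]sum_sgn_trQ.
rewrite [RHS](reindex_inj (h := fun l => l ^+ (2 ^ 2) * t)) /=.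
  apply: eq_bigl => l; rewrite !inE sigmaM st sigmaX (inj_eq (mulIf t_neq0)).
  by rewrite (inj_eq (frob2_inj pcharF2 (i := 2))).
by move=> l l' /= /(mulIf t_neq0) /(frob2_inj pcharF2).
Qed.

(* On T, where sigma^2(x) = x + sigma(x), the relative trace of c x^d
   factors through w = c + sigma(c). *)
Lemma relTr_cxd_Tker c x : x \in Tker ->
  relTr Q (c * x ^+ d) =
  x * sigma x * sigma (sigma x) *
    (sigma (c + sigma c) * x + (c + sigma c) * sigma x).
Proof.
rewrite inE /inT relTrE => Tx.
have s2x : sigma (sigma x) = x + sigma x.
  by apply/eqP; rewrite eq_sym -(oppr_pchar2 pcharF2 (sigma (sigma x))) -addr_eq0.
rewrite relTrE expd expr2 !sigmaM !sigma3 !sigmaD s2x; ring.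
Qed.

Lemma relTr_add_sigma c : relTr Q (c + sigma c) = 0.
Proof. by rewrite relTrD relTr_sigma (addrr_pchar2 pcharF2). Qed.

Section FixedCoefficient.
Variables (c : F) (c_notin_FQ : sigma c != c).
Local Notation w := (c + sigma c).

Lemma w_neq0 : w != 0.
Proof. by apply: contra c_notin_FQ; rewrite addr_eq0 (oppr_pchar2 pcharF2) eq_sym. Qed.

Lemma zeros_relTr_cxd x :
  (x \in Tker) && (relTr Q (c * x ^+ d) == 0) = (x / w \in FQ).
Proof.
have sw_neq0 : sigma w != 0 by rewrite sigma_eq0 w_neq0.
have lineE : (x / w \in FQ) = (sigma w * x == w * sigma x).
  rewrite inE sigmaM sigmaV -(inj_eq (mulIf sw_neq0)) (divfK sw_neq0).
  rewrite -(inj_eq (mulIf w_neq0)) mulrAC (divfK w_neq0).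
  by rewrite eq_sym [x * _]mulrC [sigma x * _]mulrC.
rewrite lineE; apply/idP/idP.
  case/andP=> Tx; rewrite relTr_cxd_Tker // !mulf_eq0 !sigma_eq0 !orbb.
  case/orP=> [/eqP-> | ]; first by rewrite sigma0 !mulr0.
  by rewrite addr_eq0 (oppr_pchar2 pcharF2).
move=> /eqP line_x.
have Tx : x \in Tker.
  rewrite inE /inT -[x](divfK w_neq0) relTrZ ?relTr_add_sigma ?mulr0 //.
  by rewrite lineE line_x.
rewrite Tx relTr_cxd_Tker // line_x (addrr_pchar2 pcharF2 (w * sigma x)).
by rewrite mulr0 eqxx.
Qed.

Lemma card_zeros_relTr_cxd :
  #|[pred x | (x \in Tker) && (relTr Q (c * x ^+ d) == 0)]| = Q.
Proof.
rewrite (eq_card zeros_relTr_cxd) -card_FQ -(card_imset FQ (mulIf w_neq0)).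
apply: eq_card => x; apply/idP/imsetP => [Kx | [l Kl ->]].
  by exists (x / w); rewrite // divfK ?w_neq0.
by rewrite unfold_in /= mulfK ?w_neq0.
Qed.

(* Multiplication by a nonzero l in K permutes T. *)
Lemma sum_csign_dilate l : l \in FQ -> l != 0 ->
  \sum_(x in Tker) csign c (l * x) = \sum_(x in Tker) csign c x.
Proof.
move=> Kl l_neq0; rewrite [RHS](reindex_inj (mulfI l_neq0)) /=.
by apply: eq_bigl => x; rewrite !inE /inT relTrZ // mulf_eq0 (negbTE l_neq0).
Qed.

(* Summing over T first: by sum_csign_FQ each x with Tr_{F/K}(c x^d) = 0
   contributes Q and all others 0, and there are Q such x. *)
Lemma double_sum_csign :
  \sum_(l in FQ) \sum_(x in Tker) csign c (l * x) = (Q * Q)%N%:Z.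
Proof.
rewrite exchange_big (eq_bigr _ (fun x _ => sum_csign_FQ c x)) /= -big_mkcondr.
rewrite sumr_const (eq_card (B := [pred x | _]) (frefl _)) card_zeros_relTr_cxd.
by rewrite -natz -mulrnA natz.
Qed.

(* Summing over K first: l = 0 contributes |T| = Q^2 and each of the Q - 1
   nonzero l contributes S, so (Q - 1) S = 0. *)
Lemma sum_csign_Tker : \sum_(x in Tker) csign c x = 0.
Proof.
set S := \sum_(x in Tker) _.
have csign0 : csign c 0 = 1.
  rewrite /csign expr0n mulr0 /absTr big1 ?/sgnF2 ?eqxx // => i _.
  by rewrite expr0n expn_eq0.
have K0 : (0 : F) \in FQ by apply/FQP; rewrite sigma0.
have : \sum_(l in FQ) \sum_(x in Tker) csign c (l * x) =
       (Q * Q)%N%:Z + S *+ (Q - 1).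
  rewrite (bigD1 0) //=; congr (_ + _).
    rewrite (eq_bigr (fun _ => 1)) => [|x _]; last by rewrite mul0r.
    by rewrite sumr_const card_Tker -mulnn natz.
  rewrite (eq_bigr (fun _ => S)) => [|l /andP[l_neq0 Kl]]; last exact: sum_csign_dilate.
  rewrite sumr_const; congr (_ *+ _).
  rewrite -card_FQ (cardD1 0 FQ) K0 add1n subn1 /=.
  by apply: eq_card => l; rewrite unfold_in !inE andbC.
rewrite double_sum_csign -[LHS]addr0 => /addrI /esym /eqP.
by rewrite mulrn_eq0 subn_eq0 leqNgt Q_gt1 => /eqP.
Qed.

End FixedCoefficient.
End CubicExtension.

Theorem mainTheorem6 (F : finFieldType) (q m k : nat)
  (hq : q = (2 ^ m)%N) (hm : (0 < m)%N) (hk : (1 <= k)%N)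
  (hcard : #|F| = (q ^ (3 * k))%N)
  (c : F) (hc : c ^+ (q ^ k)%N != c) :
  \sum_(x : F | inT (q ^ k)%N x)
     sgnF2 (absTr (m * (3 * k))%N (c * x ^+ (1 + 2 * q ^ k + q ^ (2 * k))%N))
  = 0 :> int.
Proof.
have qk : (q ^ k = 2 ^ (m * k))%N by rewrite hq expnM.
have q2k : (q ^ (2 * k) = (2 ^ (m * k)) ^ 2)%N by rewrite mulnC expnM qk.
have cardF : #|F| = ((2 ^ (m * k)) ^ 3)%N by rewrite hcard mulnC expnM qk.
have mk_gt0 : (0 < m * k)%N by rewrite muln_gt0 hm.
rewrite qk in hc; rewrite qk q2k (_ : (m * (3 * k) = m * k * 3)%N); last by lia.
exact: (sum_csign_Tker mk_gt0 cardF hc).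
Qed.
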